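(* Let $u\in\mathcal{B}^N$, $m\in\mathbb{R}$, $\varepsilon>0$, $(r,\sigma)\in F(N,A,u,m)$ and $(t,\sigma)\in F(N,A,u,m-\varepsilon)$ such that $r_a>t_a$ for each $a\in A$. Suppose there is no $i\in N$ and $a\in A$ with $r_a>b_i>t_a$. Then $\sigma$ is a maximum weight perfect matching in $\mathcal{F}^u(r)$.
   Context: Fix a finite set $\{\rho_1,\dots,\rho_k\}\subseteq\mathbb{R}_+$ with $\rho_1=0$. $N=\{1,\dots,n\}$ agents, $A$ a set of $n$ rooms. $\mathcal{B}$ is the set of utility functions $u_i(r_a,a)=v^i_a-r_a-\rho_i\max\{0,r_a-b_i\}$ with $v^i\in\mathbb{R}^A$, $b_i\ge0$, $\rho_i\in\{\rho_1,\dots,\rho_k\}$. An allocation for $(N,A,u,m)$ is $(r,\sigma)$ with $\sigma:N\to A$ a bijection, $r\in\mathbb{R}^A$, $\sum_ar_a=m$; envy-free means $u_i(r_{\sigma(i)},\sigma(i))\ge u_i(r_{\sigma(j)},\sigma(j))$ for all $i,j$; $F(N,A,u,m)$ is the set of envy-free allocations. $\lambda_{ia}(u,r):=1+\rho_i$ if $r_a>b_i$, else $1$. For $r$ with some envy-free $(r,\sigma)$, $\mathcal{F}(r)$ is the bipartite graph on $N\cup A$ with edge $(i,a)$ iff $u_i(r_{\sigma(i)},\sigma(i))=u_i(r_a,a)$, and $\mathcal{F}^u(r)$ is this graph with weights $w(i,a)=\log\lambda_{ia}(u,r)$; a maximum weight perfect matching is a bijection $\mu:N\to A$ using only edges of $\mathcal{F}(r)$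 and maximizing $\sum_iw(i,\mu(i))$ among such. *)

From mathcomp Require Import all_boot all_order all_algebra.
From mathcomp Require Import reals exp.
Set Implicit Arguments. Unset Strict Implicit. Unset Printing Implicit Defensive.
Import Order.TTheory GRing.Theory Num.Theory.
Local Open Scope ring_scope.

Section Defs.
Variable R : realType.

(* Agents N = {1..n} are 'I_n; rooms are a finite type A with #|A| = n.
   A utility profile in B^N is given by, for each agent i,
   values v i : A -> R, budget b i, penalty rate rho i. *)
Record profile (n : nat) (A : finType) := Profile {
  val_ : 'I_n -> A -> R;
  bud_ : 'I_n -> R;
  rho_ : 'I_n -> R }.

Definition rho_set_ok (rhos : seq R) : Prop :=
  head 1 rhos = 0 /\ all (fun x => 0 <= x) rhos.

Definition in_B (rhos : seq R) n A (u : profile n A) : Prop :=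
  forall i, 0 <= bud_ u i /\ rho_ u i \in rhos.

Definition util n (A : finType) (u : profile n A) (i : 'I_n) (x : R) (a : A) : R :=
  val_ u i a - x - rho_ u i * Num.max 0 (x - bud_ u i).

Definition allocation n (A : finType) (m : R) (r : A -> R) (sigma : 'I_n -> A) : Prop :=
  bijective sigma /\ \sum_(a : A) r a = m.

Definition envy_free n (A : finType) (u : profile n A) (r : A -> R) (sigma : 'I_n -> A) :=
  forall i j : 'I_n, util u i (r (sigma j)) (sigma j) <= util u i (r (sigma i)) (sigma i).

Definition in_F n A (u : profile n A) (m : R) (r : A -> R) (sigma : 'I_n -> A) :=
  allocation m r sigma /\ envy_free u r sigma.

Definition lambda n (A : finType) (u : profile n A) (r : A -> R) (i : 'I_n) (a : A) : R :=
  if r a > bud_ u i then 1 + rho_ u i else 1.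

Definition Fedge n A (u : profile n A) (r : A -> R) (sigma : 'I_n -> A)
  (i : 'I_n) (a : A) : Prop :=
  util u i (r (sigma i)) (sigma i) = util u i (r a) a.

Definition weight n (A : finType) (u : profile n A) (r : A -> R) (i : 'I_n) (a : A) : R :=
  ln (lambda u r i a).

Definition perfect_matching n (A : finType) (u : profile n A) (r : A -> R) (sigma : 'I_n -> A)
  (mu : 'I_n -> A) : Prop :=
  bijective mu /\ forall i, Fedge u r sigma i (mu i).

Definition max_weight_pm n (A : finType) (u : profile n A) (r : A -> R) (sigma : 'I_n -> A)
  (mu : 'I_n -> A) : Prop :=
  perfect_matching u r sigma mu /\
  forall mu', perfect_matching u r sigma mu' ->
    \sum_(i < n) weight u r i (mu' i) <= \sum_(i < n) weight u r i (mu i).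

End Defs.

(* Lowering every price from r to t keeps each utility affine in the price on
   the relevant stretch, since no budget lies strictly between t_a and r_a:
   u_i(t_a, a) = u_i(r_a, a) + lambda_ia (r_a - t_a).  Along an edge (i, a) of
   F(r), envy-freeness of (t, sigma) then yields
   lambda_ia (r_a - t_a) <= lambda_i,sigma(i) (r_sigma(i) - t_sigma(i)).
   Taking logarithms, the potential a |-> log (r_a - t_a) shows that no perfect
   matching beats sigma, as its total over a bijection onto A does not depend
   on the matching. *)
From mathcomp Require Import all_boot all_order all_algebra.
From mathcomp Require Import reals exp.
From mathcomp Require Import ring lra.
Set Implicit Arguments. Unset Strict Implicit. Unset Printing Implicit Defensive.
Import Order.TTheory GRing.Theory Num.Theory.
Local Open Scope ring_scope.

Section MaxWeightMatching.
Variables (R : realType) (n : nat) (A : finType) (u : profile R n A).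

Lemma lambda_gt0 (r : A -> R) i a : 0 <= rho_ u i -> 0 < lambda u r i a.
Proof. by move=> rho_ge0; rewrite /lambda; case: ifP => // _; lra. Qed.

Lemma util_lower_price (r t : A -> R) i a :
  t a < r a -> ~ (t a < bud_ u i < r a) ->
  util u i (t a) a = util u i (r a) a + lambda u r i a * (r a - t a).
Proof.
move=> lt_tr no_bud; rewrite /util /lambda.
have [lt_br|le_rb] := ltrP (bud_ u i) (r a).
- have le_bt : bud_ u i <= t a.
    by rewrite leNgt; apply/negP => lt_tb; apply: no_bud; rewrite lt_tb lt_br.
  by rewrite !max_r ?subr_ge0 ?(ltW lt_br) //; ring.
- have le_tb : t a <= bud_ u i by apply: le_trans (ltW lt_tr) le_rb.
  by rewrite !max_l ?subr_le0 //; ring.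
Qed.

Lemma envy_free_room (r : A -> R) (sigma : 'I_n -> A) i a :
  bijective sigma -> envy_free u r sigma ->
  util u i (r a) a <= util u i (r (sigma i)) (sigma i).
Proof. by move=> [sigma_inv _ sigmaK] /(_ i (sigma_inv a)); rewrite sigmaK. Qed.

Lemma sum_comp_bij (F : A -> R) (f : 'I_n -> A) :
  bijective f -> \sum_(i < n) F (f i) = \sum_(a : A) F a.
Proof. by move=> f_bij; rewrite (reindex f) //; apply: onW_bij. Qed.

Lemma max_weight_pm_of_potential (r : A -> R) (sigma : 'I_n -> A) (p : A -> R) :
  bijective sigma ->
  (forall i a, Fedge u r sigma i a ->
     weight u r i a + p a <= weight u r i (sigma i) + p (sigma i)) ->
  max_weight_pm u r sigma sigma.
Proof.
move=> sigma_bij p_opt; split; first by split.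
move=> mu [mu_bij mu_edge].
have : \sum_(i < n) (weight u r i (mu i) + p (mu i)) <=
       \sum_(i < n) (weight u r i (sigma i) + p (sigma i)).
  by apply: ler_sum => i _; apply: p_opt.
by rewrite !big_split /= !sum_comp_bij // lerD2r.
Qed.

Lemma weight_price_drop_le (r t : A -> R) (sigma : 'I_n -> A) i a :
  0 <= rho_ u i -> bijective sigma -> envy_free u t sigma ->
  (forall b, t b < r b) -> (forall b, ~ (t b < bud_ u i < r b)) ->
  Fedge u r sigma i a ->
  weight u r i a + ln (r a - t a) <=
    weight u r i (sigma i) + ln (r (sigma i) - t (sigma i)).
Proof.
move=> rho_ge0 sigma_bij eft lt_tr no_bud edge.
have gap_gt0 b : 0 < r b - t b by rewrite subr_gt0.
have lam_gt0 b : 0 < lambda u r i b by apply: lambda_gt0.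
rewrite /weight -!lnM ?posrE // ler_ln ?posrE ?mulr_gt0 //.
have := envy_free_room i a sigma_bij eft.
rewrite !(util_lower_price (lt_tr _) (no_bud _)) -edge.
by rewrite lerD2l.
Qed.

End MaxWeightMatching.

Theorem lemma4 (R : realType) (rhos : seq R) (n : nat) (A : finType)
  (u : profile R n A) (m eps : R) (r t : A -> R) (sigma : 'I_n -> A) :
  rho_set_ok rhos ->
  #|A| = n ->
  in_B rhos u ->
  0 < eps ->
  in_F u m r sigma ->
  in_F u (m - eps) t sigma ->
  (forall a : A, t a < r a) ->
  ~ (exists (i : 'I_n) (a : A), t a < bud_ u i < r a) ->
  max_weight_pm u r sigma sigma.
Proof.
move=> [_ rhos_ge0] _ inB _ [[sigma_bij _] _] [_ eft] lt_tr no_bud.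
apply: (max_weight_pm_of_potential (p := fun a => ln (r a - t a))) => // i a.
apply: weight_price_drop_le => // [|b lt_bud].
- by have /(allP rhos_ge0) := (inB i).2.
- by apply: no_bud; exists i, b.
Qed.
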